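(* Let $R\ge1$, $\Gamma\ge1$, $1\le s_1\le n_1$, $1\le s_2\le n_2$. For all $0<\varepsilon<1$, $$\log N(S^{R,\Gamma}_{s_1,s_2},\|\cdot\|_F,\varepsilon)\le R(s_1+s_2+1)\log\!\Big(\frac{18\Gamma R}{\varepsilon}\Big)+Rs_1\log\!\Big(\frac{en_1}{s_1}\Big)+Rs_2\log\!\Big(\frac{en_2}{s_2}\Big).$$
   Context: $N(M,\|\cdot\|,\varepsilon)$ is the minimal number of $\|\cdot\|$-balls of radius $\varepsilon$ needed to cover $M$. $S^{R,\Gamma}_{s_1,s_2}$ is the set of $Z=\sum_{r=1}^R\sigma_ru^r(v^r)^T\in\mathbb{R}^{n_1\times n_2}$ with $u^r\in\mathbb{R}^{n_1}$, $v^r\in\mathbb{R}^{n_2}$, $|\mathrm{supp}(u^r)|\le s_1$, $|\mathrm{supp}(v^r)|\le s_2$, $\|u^r\|_2=\|v^r\|_2=1$ for all $r$, and $\sigma\in\mathbb{R}^R$ with $\|\sigma\|_2\le\Gamma$. *)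

From Stdlib Require Import Reals Lra List.
Import ListNotations.
Open Scope R_scope.

Fixpoint sumR (n : nat) (f : nat -> R) : R :=
  match n with
  | O => 0
  | S k => sumR k f + f k
  end.

Definition norm2 (n : nat) (x : nat -> R) : R :=
  sqrt (sumR n (fun i => x i ^ 2)).

Definition supp_card (n : nat) (x : nat -> R) : nat :=
  length (filter (fun i => if Req_EM_T (x i) 0 then false else true) (seq 0 n)).

(* An n1 x n2 real matrix is represented by its entries A i j, i < n1, j < n2
   (values outside this range are irrelevant). *)
Definition frob (n1 n2 : nat) (A : nat -> nat -> R) : R :=
  sqrt (sumR n1 (fun i => sumR n2 (fun j => A i j ^ 2))).

Definition mat_sub (A B : nat -> nat -> R) : nat -> nat -> R :=
  fun i j => A i j - B i j.

Definition S_set (n1 n2 s1 s2 Rk : nat) (Gam : R) (Z : nat -> nat -> R) : Prop :=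
  exists (sigma : nat -> R) (u v : nat -> nat -> R),
    (forall r, (r < Rk)%nat ->
       (supp_card n1 (u r) <= s1)%nat /\ (supp_card n2 (v r) <= s2)%nat /\
       norm2 n1 (u r) = 1 /\ norm2 n2 (v r) = 1) /\
    norm2 Rk sigma <= Gam /\
    (forall i j, (i < n1)%nat -> (j < n2)%nat ->
       Z i j = sumR Rk (fun r => sigma r * u r i * v r j)).

Definition is_cover (n1 n2 : nat) (M : (nat -> nat -> R) -> Prop) (eps : R)
    (centers : list (nat -> nat -> R)) : Prop :=
  forall Z, M Z -> exists c, In c centers /\ frob n1 n2 (mat_sub Z c) <= eps.

Definition is_covering_number (n1 n2 : nat) (M : (nat -> nat -> R) -> Prop)
    (eps : R) (N : nat) : Prop :=
  (exists centers, length centers = N /\ is_cover n1 n2 M eps centers) /\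
  (forall centers, is_cover n1 n2 M eps centers -> (N <= length centers)%nat).

From Stdlib Require Import Reals Lra Lia List ZArith Classical Wf_nat.
Import ListNotations.
Open Scope R_scope.

(* Each Z in S is sum_r (sigma_r u_r) v_r^T, with sigma_r u_r an s1-sparse vector of norm
   at most Gam and v_r an s2-sparse unit vector.  Rounding an s-sparse vector of norm at
   most rho to the grid (rho / (X sqrt s)) Z^n yields an integer vector with at most s
   nonzero entries and l1-norm at most s (X + 1/2), at squared error at most (rho / 2X)^2;
   for X = 2 Gam R / eps the correspondingly rounded sum is eps-close to Z in Frobenius
   norm.  A generating-function count bounds the number of such integer vectors by
   (e n / s * 9 X)^s, and R-tuples of rounded pairs give a cover of the required size. *)

Lemma sumR_ext n f g : (forall i, (i < n)%nat -> f i = g i) -> sumR n f = sumR n g.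
Proof. induction n as [|n IH]; simpl; intros H; auto. rewrite IH, H; auto. Qed.

Lemma sumR_le n f g : (forall i, (i < n)%nat -> f i <= g i) -> sumR n f <= sumR n g.
Proof.
  induction n as [|n IH]; simpl; intros H; [lra|].
  pose proof (H n ltac:(lia)). pose proof (IH ltac:(intros; apply H; lia)). lra.
Qed.

Lemma sumR_ge0 n f : (forall i, (i < n)%nat -> 0 <= f i) -> 0 <= sumR n f.
Proof.
  induction n as [|n IH]; simpl; intros H; [lra|].
  pose proof (H n ltac:(lia)). pose proof (IH ltac:(intros; apply H; lia)). lra.
Qed.

Lemma sumR_sqr_ge0 n f : 0 <= sumR n (fun i => f i ^ 2).
Proof. apply sumR_ge0; intros; apply pow2_ge_0. Qed.

Lemma sumR_add n f g : sumR n (fun i => f i + g i) = sumR n f + sumR n g.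
Proof. induction n as [|n IH]; simpl; [lra|]. rewrite IH; lra. Qed.

Lemma sumR_sub n f g : sumR n (fun i => f i - g i) = sumR n f - sumR n g.
Proof. induction n as [|n IH]; simpl; [lra|]. rewrite IH; lra. Qed.

Lemma sumR_scal n c f : sumR n (fun i => c * f i) = c * sumR n f.
Proof. induction n as [|n IH]; simpl; [lra|]. rewrite IH; lra. Qed.

Lemma sumR_const n c : sumR n (fun _ => c) = INR n * c.
Proof. induction n as [|n IH]; [simpl; ring|]. rewrite S_INR; simpl; rewrite IH; ring. Qed.

Lemma sumR_swap n m (f : nat -> nat -> R) :
  sumR n (fun i => sumR m (fun j => f i j)) = sumR m (fun j => sumR n (fun i => f i j)).
Proof.
  induction n as [|n IH]; simpl.
  - rewrite sumR_const; ring.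
  - rewrite IH, <- sumR_add. reflexivity.
Qed.

Lemma sumR_mul n m a b :
  sumR n (fun i => sumR m (fun j => a i * b j)) = sumR n a * sumR m b.
Proof. induction n as [|n IH]; simpl; [lra|]. rewrite IH, sumR_scal. lra. Qed.

Lemma sumR_le_term n f k :
  (forall i, (i < n)%nat -> 0 <= f i) -> (k < n)%nat -> f k <= sumR n f.
Proof.
  induction n as [|n IH]; intros H Hk; [lia|]. simpl.
  assert (0 <= sumR n f) by (apply sumR_ge0; intros; apply H; lia).
  destruct (Nat.eq_dec k n) as [->|Hkn]; [lra|].
  pose proof (H n ltac:(lia)).
  assert (f k <= sumR n f) by (apply IH; [intros; apply H|]; lia). lra.
Qed.

Lemma supp_card_S n x :
  supp_card (S n) x = (supp_card n x + (if Req_EM_T (x n) 0 then 0 else 1))%nat.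
Proof.
  unfold supp_card. rewrite seq_S, filter_app, length_app. simpl.
  destruct (Req_EM_T (x n) 0); reflexivity.
Qed.

Lemma supp_card_le n x : (supp_card n x <= n)%nat.
Proof.
  induction n as [|n IH]; [reflexivity|]. rewrite supp_card_S.
  destruct (Req_EM_T (x n) 0); lia.
Qed.

Lemma supp_card_mono n x y : (forall i, (i < n)%nat -> x i <> 0 -> y i <> 0) ->
  (supp_card n x <= supp_card n y)%nat.
Proof.
  induction n as [|n IH]; intros H; [reflexivity|]. rewrite !supp_card_S.
  specialize (IH ltac:(intros; apply H; auto; lia)).
  destruct (Req_EM_T (x n) 0); destruct (Req_EM_T (y n) 0); try lia.
  exfalso; apply (H n); auto.
Qed.

Lemma sumR_supp_indicator n x c :
  sumR n (fun i => if Req_EM_T (x i) 0 then 0 else c) = c * INR (supp_card n x).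
Proof.
  induction n as [|n IH]; [simpl; lra|].
  rewrite supp_card_S, plus_INR. simpl sumR. rewrite IH.
  destruct (Req_EM_T (x n) 0); simpl; lra.
Qed.

Lemma sqr_sumR_le_supp_card n f :
  (sumR n f) ^ 2 <= INR (supp_card n f) * sumR n (fun i => f i ^ 2).
Proof.
  induction n as [|n IH]; [simpl; lra|]. cbn [sumR]. rewrite supp_card_S.
  set (S0 := sumR n f) in *. set (Q := sumR n (fun i => f i ^ 2)) in *.
  set (c := INR (supp_card n f)) in *.
  assert (HQ : 0 <= Q) by apply sumR_sqr_ge0.
  assert (Hc : 0 <= c) by apply pos_INR.
  destruct (Req_EM_T (f n) 0) as [E|E].
  - rewrite E, Nat.add_0_r. fold c. nra.
  - rewrite plus_INR. simpl INR. fold c. set (x := f n).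
    destruct (Rle_lt_dec c 0) as [Hc0|Hc0].
    + assert (HS0 : S0 = 0) by nra. rewrite HS0. nra.
    + assert (2 * S0 * x <= Q + c * x ^ 2).
      { apply Rmult_le_reg_l with c; [lra|]. pose proof (pow2_ge_0 (S0 - c * x)). nra. }
      nra.
Qed.

Lemma sqr_sumR_le n f : (sumR n f) ^ 2 <= INR n * sumR n (fun i => f i ^ 2).
Proof.
  eapply Rle_trans; [apply sqr_sumR_le_supp_card|].
  apply Rmult_le_compat_r; [apply sumR_sqr_ge0|]. apply le_INR, supp_card_le.
Qed.

Lemma sumR_abs_le_sqrt_supp n s x rho :
  (supp_card n x <= s)%nat -> 0 <= rho -> sumR n (fun i => x i ^ 2) <= rho ^ 2 ->
  sumR n (fun i => Rabs (x i)) <= sqrt (INR s) * rho.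
Proof.
  intros Hs Hrho Hx.
  assert (Hsupp : (supp_card n (fun i => Rabs (x i)) <= s)%nat).
  { eapply Nat.le_trans; [|exact Hs]. apply supp_card_mono.
    intros i _ H E. apply H. rewrite E, Rabs_R0. reflexivity. }
  rewrite <- (sqrt_pow2 (sumR _ _)) by (apply sumR_ge0; intros; apply Rabs_pos).
  rewrite <- (sqrt_pow2 rho), <- sqrt_mult by (apply pos_INR || apply pow2_ge_0 || auto).
  apply sqrt_le_1_alt. eapply Rle_trans; [apply sqr_sumR_le_supp_card|].
  rewrite (sumR_ext _ _ (fun i => x i ^ 2)) by (intros; apply pow2_abs).
  apply Rmult_le_compat; [apply pos_INR | apply sumR_sqr_ge0 | apply le_INR | ]; auto.
Qed.

Lemma sumR_sqr_of_norm2 n x : sumR n (fun i => x i ^ 2) = norm2 n x ^ 2.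
Proof. unfold norm2. rewrite <- Rsqr_pow2, Rsqr_sqrt; [reflexivity | apply sumR_sqr_ge0]. Qed.

Definition round_nearest (x : R) : Z := up (x - / 2).

Lemma round_nearest_error x : Rabs (x - IZR (round_nearest x)) <= / 2.
Proof. unfold round_nearest. destruct (archimed (x - / 2)). apply Rabs_le. lra. Qed.

Lemma round_nearest_0 : round_nearest 0 = 0%Z.
Proof. unfold round_nearest. symmetry. apply tech_up; simpl; lra. Qed.

(* The integer vector of [x] on the grid of mesh [/ K], in grid units. *)
Definition zround (K : R) (x : nat -> R) (i : nat) : Z := round_nearest (K * x i).

Fixpoint zsupp_card (n : nat) (z : nat -> Z) : nat :=
  match n with
  | O => O
  | S n' => (zsupp_card n' z + (if Z.eqb (z n') 0 then 0 else 1))%nat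
  end.

Fixpoint zl1 (n : nat) (z : nat -> Z) : nat :=
  match n with
  | O => O
  | S n' => (zl1 n' z + Z.abs_nat (z n'))%nat
  end.

Lemma zl1_INR n z : INR (zl1 n z) = sumR n (fun i => Rabs (IZR (z i))).
Proof.
  induction n as [|n IH]; [reflexivity|]. cbn [zl1 sumR].
  rewrite plus_INR, IH, <- abs_IZR, INR_IZR_INZ, Zabs2Nat.id_abs. reflexivity.
Qed.

Lemma zsupp_card_zround_le n K x : (zsupp_card n (zround K x) <= supp_card n x)%nat.
Proof.
  induction n as [|n IH]; [reflexivity|]. cbn [zsupp_card]. rewrite supp_card_S.
  change (zround K x n) with (round_nearest (K * x n)).
  destruct (Req_EM_T (x n) 0) as [E|E].
  - rewrite E, Rmult_0_r, round_nearest_0. simpl. lia.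
  - destruct (Z.eqb _ _); lia.
Qed.

Lemma zl1_zround_le n K x : 0 <= K ->
  INR (zl1 n (zround K x)) <= K * sumR n (fun i => Rabs (x i)) + INR (supp_card n x) / 2.
Proof.
  intros HK. rewrite zl1_INR, <- sumR_scal.
  replace (INR (supp_card n x) / 2) with (/ 2 * INR (supp_card n x)) by lra.
  rewrite <- sumR_supp_indicator, <- sumR_add. apply sumR_le. intros i _. unfold zround.
  destruct (Req_EM_T (x i) 0) as [E|E].
  - rewrite E, Rmult_0_r, round_nearest_0, Rabs_R0. lra.
  - pose proof (round_nearest_error (K * x i)) as Hr.
    pose proof (Rabs_triang (K * x i) (IZR (round_nearest (K * x i)) - K * x i)) as Ht.
    rewrite Rabs_minus_sym in Hr.
    replace (K * x i + (IZR (round_nearest (K * x i)) - K * x i))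
      with (IZR (round_nearest (K * x i))) in Ht by ring.
    rewrite Rabs_mult, (Rabs_pos_eq K) in Ht by exact HK. lra.
Qed.

Lemma zround_error_le n K x : 0 < K ->
  sumR n (fun i => (x i - IZR (zround K x i) / K) ^ 2) <= INR (supp_card n x) / (4 * K ^ 2).
Proof.
  intros HK. replace (INR (supp_card n x) / (4 * K ^ 2)) with (/ (4 * K ^ 2) * INR (supp_card n x))
    by (field; lra).
  rewrite <- sumR_supp_indicator. apply sumR_le. intros i _. unfold zround.
  destruct (Req_EM_T (x i) 0) as [E|E].
  - rewrite E, Rmult_0_r, round_nearest_0. simpl. lra.
  - pose proof (round_nearest_error (K * x i)) as Hr.
    set (d := K * x i - IZR (round_nearest (K * x i))) in *.
    replace (x i - IZR (round_nearest (K * x i)) / K) with (d / K) by (unfold d; field; lra).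
    assert (d ^ 2 <= / 4) by (rewrite <- pow2_abs; pose proof (Rabs_pos d); nra).
    replace ((d / K) ^ 2) with (d ^ 2 * / K ^ 2) by (field; lra).
    replace (/ (4 * K ^ 2)) with (/ 4 * / K ^ 2) by (field; lra).
    apply Rmult_le_compat_r; [apply Rlt_le, Rinv_0_lt_compat; nra | auto].
Qed.

Definition fupd {A} (k : nat) (a : A) (f : nat -> A) : nat -> A :=
  fun i => if Nat.eqb i k then a else f i.

(* Integer vectors on [0, n) with at most [s] nonzero entries and l1-norm at most [L]:
   the last entry is either 0 or [+-m] with [1 <= m <= L]. *)
Fixpoint sparse_lattice (n L s : nat) : list (nat -> Z) :=
  match n with
  | O => [fun _ => 0%Z]
  | S n' =>
      map (fupd n' 0%Z) (sparse_lattice n' L s) ++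
      match s with
      | O => []
      | S s' => flat_map (fun m => map (fupd n' (Z.of_nat m)) (sparse_lattice n' (L - m) s')
                                 ++ map (fupd n' (- Z.of_nat m)%Z) (sparse_lattice n' (L - m) s'))
                         (seq 1 L)
      end
  end.

Lemma sparse_lattice_complete n : forall L s z,
  (zsupp_card n z <= s)%nat -> (zl1 n z <= L)%nat ->
  exists c, In c (sparse_lattice n L s) /\ forall i, (i < n)%nat -> c i = z i.
Proof.
  induction n as [|n IH]; intros L s z Hs HL.
  - exists (fun _ => 0%Z). split; [left; auto | intros; lia].
  - cbn [zsupp_card zl1] in Hs, HL.
    assert (Hext : forall c, (forall i, (i < n)%nat -> c i = z i) ->
              forall i, (i < S n)%nat -> fupd n (z n) c i = z i).
    { intros c Hc i Hi. unfold fupd. destruct (Nat.eqb_spec i n); [subst; auto | apply Hc; lia]. }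
    destruct (Z.eqb_spec (z n) 0) as [E|E].
    + destruct (IH L s z ltac:(lia) ltac:(lia)) as [c [Hc Hcz]].
      exists (fupd n (z n) c). split; [|exact (Hext c Hcz)].
      rewrite E. apply in_or_app. left. apply in_map. exact Hc.
    + destruct s as [|s]; [lia|].
      set (m := Z.abs_nat (z n)).
      destruct (IH (L - m)%nat s z ltac:(lia) ltac:(lia)) as [c [Hc Hcz]].
      exists (fupd n (z n) c). split; [|exact (Hext c Hcz)].
      apply in_or_app. right. apply in_flat_map. exists m. split; [apply in_seq; lia|].
      apply in_or_app.
      destruct (Z.abs_spec (z n)) as [[_ Hz]|[_ Hz]];
        [left; replace (z n) with (Z.of_nat m) by lia
        | right; replace (z n) with (- Z.of_nat m)%Z by lia];
        apply in_map; exact Hc.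
Qed.

Lemma length_flat_map_seq_le {B} (f : nat -> list B) a L g :
  (forall m, (a <= m < a + L)%nat -> INR (length (f m)) <= g m) ->
  INR (length (flat_map f (seq a L))) <= sumR L (fun k => g (a + k)%nat).
Proof.
  induction L as [|L IH]; intros H; [simpl; lra|].
  rewrite seq_S, flat_map_app, length_app, plus_INR. cbn [sumR flat_map].
  rewrite app_nil_r. pose proof (H (a + L)%nat ltac:(lia)).
  pose proof (IH ltac:(intros; apply H; lia)). lra.
Qed.

Lemma sumR_geom_le rho L : 0 <= rho < 1 -> sumR L (fun k => rho ^ S k) <= rho / (1 - rho).
Proof.
  intros Hrho.
  assert (E : sumR L (fun k => rho ^ S k) * (1 - rho) = rho - rho ^ S L).
  { induction L as [|L IH]; cbn [sumR]; [simpl; ring|].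
    rewrite Rmult_plus_distr_r, IH. simpl. ring. }
  pose proof (pow_le rho (S L) ltac:(lra)).
  apply Rmult_le_reg_r with (1 - rho); [lra|].
  rewrite E. unfold Rdiv. rewrite Rmult_assoc, Rinv_l; lra.
Qed.

Lemma length_sparse_lattice_branch_le n L s rho D : 0 < rho < 1 -> 0 <= D ->
  (forall L', INR (length (sparse_lattice n L' s)) <= (/ rho) ^ L' * D) ->
  INR (length (flat_map (fun m =>
         map (fupd n (Z.of_nat m)) (sparse_lattice n (L - m) s)
      ++ map (fupd n (- Z.of_nat m)%Z) (sparse_lattice n (L - m) s)) (seq 1 L)))
  <= 2 * ((/ rho) ^ L * D) * (rho / (1 - rho)).
Proof.
  intros Hrho HD HL.
  assert (0 <= (/ rho) ^ L * D)
    by (apply Rmult_le_pos; [apply pow_le, Rlt_le, Rinv_0_lt_compat; lra | exact HD]).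
  eapply Rle_trans.
  - apply (length_flat_map_seq_le _ 1 L (fun m => 2 * ((/ rho) ^ L * D) * rho ^ m)).
    intros m Hm. rewrite length_app, !length_map, plus_INR.
    assert (Hsplit : (/ rho) ^ L = (/ rho) ^ (L - m) * (/ rho) ^ m)
      by (rewrite <- pow_add; f_equal; lia).
    assert (Hinv : (/ rho) ^ m * rho ^ m = 1)
      by (rewrite <- Rpow_mult_distr, Rinv_l, pow1; lra).
    assert (E : 2 * ((/ rho) ^ L * D) * rho ^ m
                = 2 * ((/ rho) ^ (L - m) * D) * ((/ rho) ^ m * rho ^ m))
      by (rewrite Hsplit; ring).
    rewrite Hinv in E. pose proof (HL (L - m)%nat). lra.
  - rewrite sumR_scal. apply Rmult_le_compat_l; [lra|]. apply sumR_geom_le; lra.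
Qed.

(* Generating-function bound: each of the [n] entries contributes a factor
   [sum_m rho^|m| lam^[m <> 0] <= 1 + 2 lam rho / (1 - rho)]. *)
Lemma length_sparse_lattice_le_gf rho lam : 0 < rho < 1 -> 0 < lam <= 1 ->
  forall n L s, INR (length (sparse_lattice n L s)) <=
    (/ rho) ^ L * (/ lam) ^ s * (1 + 2 * lam * rho / (1 - rho)) ^ n.
Proof.
  intros Hrho Hlam. set (q := 1 + 2 * lam * rho / (1 - rho)).
  assert (Hq : 1 <= q).
  { unfold q. assert (0 <= 2 * lam * rho / (1 - rho)); [|lra].
    apply Rmult_le_pos; [nra | apply Rlt_le, Rinv_0_lt_compat; lra]. }
  assert (Hir : 1 <= / rho) by (rewrite <- Rinv_1; apply Rinv_le_contravar; lra).
  assert (Hil : 1 <= / lam) by (rewrite <- Rinv_1; apply Rinv_le_contravar; lra).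
  induction n as [|n IH]; intros L s.
  - simpl. pose proof (pow_R1_Rle _ L Hir). pose proof (pow_R1_Rle _ s Hil). nra.
  - cbn [sparse_lattice]. rewrite length_app, length_map, plus_INR.
    pose proof (IH L s) as Hzero. rewrite Rmult_assoc in Hzero.
    destruct s as [|s].
    + simpl length. rewrite Rplus_0_r.
      assert (0 <= (/ rho) ^ L * q ^ n) by (apply Rmult_le_pos; apply pow_le; lra).
      simpl pow in *. nra.
    + assert (Hbranch := length_sparse_lattice_branch_le n L s rho ((/ lam) ^ s * q ^ n) Hrho
                           ltac:(apply Rmult_le_pos; apply pow_le; lra)
                           ltac:(intros; rewrite <- Rmult_assoc; apply IH)).
      replace ((/ rho) ^ L * (/ lam) ^ S s * q ^ S n)
        with ((/ rho) ^ L * ((/ lam) ^ S s * q ^ n)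
              + 2 * ((/ rho) ^ L * ((/ lam) ^ s * q ^ n)) * (rho / (1 - rho)))
        by (unfold q; simpl; field; lra).
      lra.
Qed.

Lemma Rdiv_ge0 a b : 0 <= a -> 0 < b -> 0 <= a / b.
Proof. intros. apply Rmult_le_pos; [assumption | apply Rlt_le, Rinv_0_lt_compat; assumption]. Qed.

Lemma exp_le_exp x y : x <= y -> exp x <= exp y.
Proof. intros [H|H]; [apply Rlt_le, exp_increasing, H | rewrite H; apply Rle_refl]. Qed.

Lemma exp_mult_INR k x : exp (INR k * x) = exp x ^ k.
Proof. rewrite <- Rpower_pow by apply exp_pos. unfold Rpower. rewrite ln_exp. reflexivity. Qed.

Lemma pow_1_add_le_exp x k : 0 <= x -> (1 + x) ^ k <= exp (INR k * x).
Proof. intros Hx. rewrite exp_mult_INR. apply pow_incr. pose proof (exp_ineq1_le x). lra. Qed.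

(* Take [rho = 1 / (1 + t)] with [t = s / Lr] and [lam = s^2 / (2 n Lr)] in the
   generating-function bound; its three factors become [<= e^s], [(2 n Lr / s^2)^s]
   and [(1 + s / n)^n <= e^s]. *)
Lemma length_sparse_lattice_le n L s Lr :
  (1 <= s)%nat -> (s <= n)%nat -> INR s / 2 <= Lr -> INR L <= Lr ->
  INR (length (sparse_lattice n L s)) <=
    (exp 1 * INR n / INR s * (2 * exp 1 * Lr / INR s)) ^ s.
Proof.
  intros H1s Hsn HLr HL.
  assert (Hs : 1 <= INR s) by (apply (le_INR 1); auto).
  assert (Hn : INR s <= INR n) by (apply le_INR; auto).
  set (t := INR s / Lr).
  assert (Ht : 0 < t) by (unfold t; apply Rdiv_lt_0_compat; lra).
  set (lam := INR s * INR s / (2 * INR n * Lr)).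
  assert (Hlam : 0 < lam <= 1).
  { unfold lam. split; [apply Rdiv_lt_0_compat; nra|].
    apply Rmult_le_reg_r with (2 * INR n * Lr); [nra|].
    unfold Rdiv. rewrite Rmult_assoc, Rinv_l; nra. }
  assert (Hrho : 0 < / (1 + t) < 1).
  { split; [apply Rinv_0_lt_compat; lra|]. rewrite <- Rinv_1. apply Rinv_lt_contravar; lra. }
  eapply Rle_trans; [apply (length_sparse_lattice_le_gf _ lam Hrho Hlam)|].
  rewrite Rinv_inv.
  replace (1 + 2 * lam * / (1 + t) / (1 - / (1 + t))) with (1 + INR s / INR n)
    by (unfold lam, t; field; repeat split; lra).
  assert (Hexp_L : (1 + t) ^ L <= exp 1 ^ s).
  { eapply Rle_trans; [apply pow_1_add_le_exp; lra|].
    rewrite <- exp_mult_INR. apply exp_le_exp.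
    unfold t. replace (INR s * 1) with (Lr * (INR s / Lr)) by (field; lra).
    apply Rmult_le_compat_r; [apply Rlt_le, Ht | exact HL]. }
  assert (Hexp_n : (1 + INR s / INR n) ^ n <= exp 1 ^ s).
  { eapply Rle_trans; [apply pow_1_add_le_exp; apply Rdiv_ge0; lra|].
    rewrite <- exp_mult_INR. right. f_equal. field. lra. }
  replace (/ lam) with (2 * INR n * Lr / (INR s * INR s)) by (unfold lam; field; repeat split; lra).
  replace (exp 1 * INR n / INR s * (2 * exp 1 * Lr / INR s))
    with (exp 1 * (2 * INR n * Lr / (INR s * INR s)) * exp 1) by (field; lra).
  rewrite !Rpow_mult_distr.
  assert (0 <= (2 * INR n * Lr / (INR s * INR s)) ^ s)
    by (apply pow_le, Rdiv_ge0; nra).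
  assert (0 <= INR s / INR n) by (apply Rdiv_ge0; lra).
  apply Rmult_le_compat; [| apply pow_le; lra | | exact Hexp_n].
  - apply Rmult_le_pos; [apply pow_le; lra | assumption].
  - apply Rmult_le_compat_r; assumption.
Qed.

Definition floor_nat (y : R) : nat := Z.to_nat (up y - 1).

Lemma floor_nat_le y : 0 <= y -> INR (floor_nat y) <= y.
Proof.
  intros Hy. destruct (archimed y) as [H1 H2]. unfold floor_nat.
  assert (Hup : (0 < up y)%Z) by (apply lt_IZR; simpl; lra).
  rewrite INR_IZR_INZ, Z2Nat.id by lia. rewrite minus_IZR. simpl. lra.
Qed.

Lemma le_floor_nat k y : INR k <= y -> (k <= floor_nat y)%nat.
Proof.
  intros Hk. destruct (archimed y) as [H1 _]. unfold floor_nat.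
  rewrite INR_IZR_INZ in Hk. assert (Hlt : IZR (Z.of_nat k) < IZR (up y)) by lra.
  apply lt_IZR in Hlt. lia.
Qed.

Definition grid_scale (X : R) (s : nat) (rho : R) : R := X * sqrt (INR s) / rho.

Section SparseRounding.

Variables (n s : nat) (x : nat -> R) (rho X : R).
Hypotheses (Hsupp : (supp_card n x <= s)%nat) (Hs : (1 <= s)%nat) (Hrho : 0 < rho) (HX : 0 < X).

Let K := grid_scale X s rho.

Lemma grid_scale_sqr : K ^ 2 = X ^ 2 * INR s / rho ^ 2.
Proof.
  assert (1 <= INR s) by (apply (le_INR 1); auto).
  unfold K, grid_scale. rewrite <- (sqrt_sqrt (INR s)) at 2 by lra. field. lra.
Qed.

Lemma grid_scale_pos : 0 < K.
Proof.
  assert (1 <= INR s) by (apply (le_INR 1); auto).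
  apply Rdiv_lt_0_compat; [apply Rmult_lt_0_compat; [lra | apply sqrt_lt_R0; lra] | lra].
Qed.

Lemma zround_in_sparse_lattice : sumR n (fun i => x i ^ 2) <= rho ^ 2 ->
  exists c, In c (sparse_lattice n (floor_nat (INR s * (X + / 2))) s) /\
            forall i, (i < n)%nat -> c i = zround K x i.
Proof.
  intros Hx. assert (Hs1 : 1 <= INR s) by (apply (le_INR 1); auto).
  apply sparse_lattice_complete.
  - eapply Nat.le_trans; [apply zsupp_card_zround_le | exact Hsupp].
  - apply le_floor_nat.
    eapply Rle_trans; [apply zl1_zround_le, Rlt_le, grid_scale_pos|].
    pose proof (sumR_abs_le_sqrt_supp n s x rho Hsupp (Rlt_le _ _ Hrho) Hx).
    assert (INR (supp_card n x) <= INR s) by (apply le_INR; auto).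
    assert (Hsq : sqrt (INR s) * sqrt (INR s) = INR s) by (apply sqrt_sqrt; lra).
    apply Rle_trans with (K * (sqrt (INR s) * rho) + INR s / 2).
    + pose proof grid_scale_pos. apply Rplus_le_compat; [apply Rmult_le_compat_l|]; lra.
    + right. replace (INR s * (X + / 2)) with (X * (sqrt (INR s) * sqrt (INR s)) + INR s / 2)
        by (rewrite Hsq; field).
      unfold K, grid_scale. field. lra.
Qed.

Lemma zround_sparse_error_le :
  sumR n (fun i => (x i - IZR (zround K x i) / K) ^ 2) <= rho ^ 2 / (4 * X ^ 2).
Proof.
  assert (1 <= INR s) by (apply (le_INR 1); auto).
  assert (INR (supp_card n x) <= INR s) by (apply le_INR; auto).
  eapply Rle_trans; [apply zround_error_le, grid_scale_pos|].
  rewrite grid_scale_sqr. apply Rle_trans with (INR s / (4 * (X ^ 2 * INR s / rho ^ 2))).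
  - apply Rmult_le_compat_r; [|assumption].
    apply Rlt_le, Rinv_0_lt_compat. apply Rmult_lt_0_compat; [lra|].
    apply Rdiv_lt_0_compat; [apply Rmult_lt_0_compat|]; nra.
  - right. field. split; lra.
Qed.

End SparseRounding.

Fixpoint fun_tuples {A} (d : A) (P : list A) (k : nat) : list (nat -> A) :=
  match k with
  | O => [fun _ => d]
  | S k' => flat_map (fun p => map (fupd k' p) (fun_tuples d P k')) P
  end.

Lemma length_fun_tuples {A} (d : A) P k : length (fun_tuples d P k) = Nat.pow (length P) k.
Proof.
  induction k as [|k IH]; [reflexivity|]. cbn [fun_tuples Nat.pow]. rewrite <- IH.
  generalize (fun_tuples d P k). intros l. clear IH. induction P as [|p P IHP]; [reflexivity|].
  cbn [flat_map length]. rewrite length_app, length_map, IHP. reflexivity.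
Qed.

Lemma fun_tuples_complete {A} (d : A) P (Q : nat -> A -> Prop) k :
  (forall r, (r < k)%nat -> exists p, In p P /\ Q r p) ->
  exists f, In f (fun_tuples d P k) /\ forall r, (r < k)%nat -> Q r (f r).
Proof.
  induction k as [|k IH]; intros H.
  - exists (fun _ => d). split; [left; auto | intros; lia].
  - destruct (IH ltac:(intros; apply H; lia)) as [f [Hf Hfq]].
    destruct (H k ltac:(lia)) as [p [Hp Hpq]].
    exists (fupd k p f). split.
    + apply in_flat_map. exists p. split; [exact Hp | apply in_map, Hf].
    + intros r Hr. unfold fupd. destruct (Nat.eqb_spec r k); [subst; auto | apply Hfq; lia].
Qed.

Lemma covering_number_exists n1 n2 M eps centers : is_cover n1 n2 M eps centers ->
  exists N, is_covering_number n1 n2 M eps N /\ (N <= length centers)%nat.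
Proof.
  intros Hc.
  destruct (dec_inh_nat_subset_has_unique_least_element
              (fun N => exists c, length c = N /\ is_cover n1 n2 M eps c))
    as [N [[[c [Hlen Hcov]] Hmin] _]].
  - intros N. apply classic.
  - exists (length centers), centers. auto.
  - exists N. split; [split|].
    + exists c. auto.
    + intros c' Hc'. apply Hmin. exists c'. auto.
    + apply Hmin. exists centers. auto.
Qed.

Lemma frob_le_of_sqr n1 n2 A eps : 0 <= eps ->
  sumR n1 (fun i => sumR n2 (fun j => A i j ^ 2)) <= eps ^ 2 -> frob n1 n2 A <= eps.
Proof.
  intros He H. unfold frob. rewrite <- (sqrt_pow2 eps) by exact He. apply sqrt_le_1_alt, H.
Qed.

Lemma sumR_sqr_rank_one_sub_le n1 n2 w v p q :
  sumR n1 (fun i => sumR n2 (fun j => (w i * v j - p i * q j) ^ 2))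
  <= 2 * sumR n1 (fun i => (w i - p i) ^ 2) * sumR n2 (fun j => q j ^ 2)
     + 2 * sumR n1 (fun i => w i ^ 2) * sumR n2 (fun j => (v j - q j) ^ 2).
Proof.
  rewrite !Rmult_assoc, <- !sumR_mul, <- !sumR_scal, <- sumR_add.
  apply sumR_le. intros i _. rewrite <- !sumR_scal, <- sumR_add. apply sumR_le. intros j _.
  pose proof (pow2_ge_0 ((w i - p i) * q j - w i * (v j - q j))). nra.
Qed.

Lemma sumR_sqr_le_near n v q :
  sumR n (fun j => q j ^ 2)
  <= 2 * sumR n (fun j => v j ^ 2) + 2 * sumR n (fun j => (v j - q j) ^ 2).
Proof.
  rewrite <- !sumR_scal, <- sumR_add. apply sumR_le. intros j _.
  pose proof (pow2_ge_0 (2 * v j - q j)). nra.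
Qed.

Lemma rank_sum_approx_error Rk n1 n2 (w p v q : nat -> nat -> R) (sig : nat -> R) Gam d1 d2 :
  0 <= d2 <= 1 ->
  (forall r, (r < Rk)%nat ->
     sumR n1 (fun i => (w r i - p r i) ^ 2) <= d1 /\
     sumR n2 (fun j => (v r j - q r j) ^ 2) <= d2 /\
     sumR n2 (fun j => v r j ^ 2) = 1 /\
     sumR n1 (fun i => w r i ^ 2) = sig r ^ 2) ->
  sumR Rk (fun r => sig r ^ 2) <= Gam ^ 2 ->
  sumR n1 (fun i => sumR n2 (fun j => (sumR Rk (fun r => w r i * v r j - p r i * q r j)) ^ 2))
  <= INR Rk * (8 * INR Rk * d1 + 2 * Gam ^ 2 * d2).
Proof.
  intros Hd2 Hr Hsig.
  apply Rle_trans with (sumR n1 (fun i => sumR n2 (fun j =>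
      INR Rk * sumR Rk (fun r => (w r i * v r j - p r i * q r j) ^ 2)))).
  { apply sumR_le; intros i _; apply sumR_le; intros j _. apply sqr_sumR_le. }
  rewrite (sumR_ext n1 _ (fun i => INR Rk * sumR Rk (fun r =>
             sumR n2 (fun j => (w r i * v r j - p r i * q r j) ^ 2))))
    by (intros; rewrite sumR_scal, sumR_swap; reflexivity).
  rewrite sumR_scal, sumR_swap. apply Rmult_le_compat_l; [apply pos_INR|].
  apply Rle_trans with (sumR Rk (fun r => 8 * d1 + 2 * d2 * sig r ^ 2)).
  - apply sumR_le. intros r Hrk. destruct (Hr r Hrk) as [Hp [Hq [Hv Hw]]].
    eapply Rle_trans; [apply sumR_sqr_rank_one_sub_le|]. rewrite Hw.
    pose proof (sumR_sqr_le_near n2 (v r) (q r)) as Hq4. rewrite Hv in Hq4.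
    pose proof (sumR_sqr_ge0 n1 (fun i => w r i - p r i)).
    pose proof (sumR_sqr_ge0 n2 (q r)).
    assert (Hpq : sumR n1 (fun i => (w r i - p r i) ^ 2) * sumR n2 (fun j => q r j ^ 2) <= d1 * 4)
      by (apply Rmult_le_compat; lra).
    assert (sig r ^ 2 * sumR n2 (fun j => (v r j - q r j) ^ 2) <= sig r ^ 2 * d2)
      by (apply Rmult_le_compat_l; [apply pow2_ge_0 | exact Hq]).
    lra.
  - rewrite sumR_add, sumR_const, sumR_scal.
    assert (2 * d2 * sumR Rk (fun r => sig r ^ 2) <= 2 * d2 * Gam ^ 2)
      by (apply Rmult_le_compat_l; lra).
    lra.
Qed.

Lemma scaled_unit_vector n s (c : R) u : (supp_card n u <= s)%nat -> norm2 n u = 1 ->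
  (supp_card n (fun i => (c * u i)%R) <= s)%nat /\ sumR n (fun i => (c * u i) ^ 2) = c ^ 2.
Proof.
  intros Hu Hnu. split.
  - eapply Nat.le_trans; [|exact Hu]. apply supp_card_mono.
    intros i _ Hcu Hui. apply Hcu. rewrite Hui. ring.
  - rewrite (sumR_ext _ _ (fun i => c ^ 2 * u i ^ 2)) by (intros; ring).
    rewrite sumR_scal, sumR_sqr_of_norm2, Hnu. ring.
Qed.

Section GridCover.

Variables (n1 n2 s1 s2 Rk : nat) (Gam X : R).
Hypotheses (Hs1 : (1 <= s1)%nat) (Hs2 : (1 <= s2)%nat) (HGam : 0 < Gam) (HX : 1 <= X).

Let lattice (n s : nat) := sparse_lattice n (floor_nat (INR s * (X + / 2))) s.
Let K1 := grid_scale X s1 Gam.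
Let K2 := grid_scale X s2 1.

(* A term [sigma_r u_r v_r^T] is represented by the rounded pair [(sigma_r u_r, v_r)]. *)
Definition grid_centers : list (nat -> nat -> R) :=
  map (fun f i j => sumR Rk (fun r => IZR (fst (f r) i) / K1 * (IZR (snd (f r) j) / K2)))
      (fun_tuples (fun _ => 0%Z, fun _ => 0%Z) (list_prod (lattice n1 s1) (lattice n2 s2)) Rk).

Lemma length_lattice_le n s : (1 <= s)%nat -> (s <= n)%nat ->
  INR (length (lattice n s)) <= (exp 1 * INR n / INR s * (9 * X)) ^ s.
Proof.
  intros H1 Hsn. assert (Hs : 1 <= INR s) by (apply (le_INR 1); auto).
  assert (INR s <= INR n) by (apply le_INR; auto).
  eapply Rle_trans; [apply (length_sparse_lattice_le _ _ _ (INR s * (X + / 2))); auto|].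
  - nra.
  - apply floor_nat_le. nra.
  - pose proof exp_le_3. pose proof (exp_pos 1).
    assert (HA : 0 <= exp 1 * INR n / INR s) by (apply Rdiv_ge0; nra).
    apply pow_incr. split.
    + apply Rmult_le_pos; [exact HA | apply Rdiv_ge0; [repeat apply Rmult_le_pos|]; lra].
    + apply Rmult_le_compat_l; [exact HA|].
      replace (2 * exp 1 * (INR s * (X + / 2)) / INR s) with (exp 1 * (2 * X + 1)) by (field; lra).
      nra.
Qed.

Lemma length_grid_centers_le : (s1 <= n1)%nat -> (s2 <= n2)%nat ->
  INR (length grid_centers) <=
    ((exp 1 * INR n1 / INR s1 * (9 * X)) ^ s1 * (exp 1 * INR n2 / INR s2 * (9 * X)) ^ s2) ^ Rk.
Proof.
  intros Hn1 Hn2. unfold grid_centers.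
  rewrite length_map, length_fun_tuples, length_prod, pow_INR, mult_INR.
  apply pow_incr. split; [apply Rmult_le_pos; apply pos_INR|].
  apply Rmult_le_compat; try apply pos_INR; apply length_lattice_le; assumption.
Qed.

Lemma rounded_pair_in_lattices w v :
  (supp_card n1 w <= s1)%nat -> sumR n1 (fun i => w i ^ 2) <= Gam ^ 2 ->
  (supp_card n2 v <= s2)%nat -> sumR n2 (fun j => v j ^ 2) <= 1 ^ 2 ->
  exists pq, In pq (list_prod (lattice n1 s1) (lattice n2 s2)) /\
    (forall i, (i < n1)%nat -> fst pq i = zround K1 w i) /\
    (forall j, (j < n2)%nat -> snd pq j = zround K2 v j).
Proof.
  intros Hw Hw2 Hv Hv2.
  destruct (zround_in_sparse_lattice n1 s1 w Gam X) as [c1 [Hc1 Hc1w]];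
    [assumption .. | lra | lra | assumption |].
  destruct (zround_in_sparse_lattice n2 s2 v 1 X) as [c2 [Hc2 Hc2v]];
    [assumption .. | lra | lra | assumption |].
  exists (c1, c2). split; [apply in_prod; assumption | split; assumption].
Qed.

Lemma grid_error_budget eps : INR Rk * (2 * INR Rk + / 2) * Gam ^ 2 <= (eps * X) ^ 2 ->
  INR Rk * (8 * INR Rk * (Gam ^ 2 / (4 * X ^ 2)) + 2 * Gam ^ 2 * (1 ^ 2 / (4 * X ^ 2)))
  <= eps ^ 2.
Proof.
  intros Heps.
  replace (INR Rk * (8 * INR Rk * (Gam ^ 2 / (4 * X ^ 2)) + 2 * Gam ^ 2 * (1 ^ 2 / (4 * X ^ 2))))
    with (INR Rk * (2 * INR Rk + / 2) * Gam ^ 2 / X ^ 2) by (field; lra).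
  apply Rmult_le_reg_r with (X ^ 2); [nra|].
  unfold Rdiv. rewrite Rmult_assoc, Rinv_l by nra. nra.
Qed.

Lemma grid_centers_cover eps : 0 <= eps ->
  INR Rk * (2 * INR Rk + / 2) * Gam ^ 2 <= (eps * X) ^ 2 ->
  is_cover n1 n2 (S_set n1 n2 s1 s2 Rk Gam) eps grid_centers.
Proof.
  intros He Heps Z [sigma [u [v [Huv [Hsig HZ]]]]].
  set (w := fun r i => sigma r * u r i).
  assert (Hsig2 : sumR Rk (fun r => sigma r ^ 2) <= Gam ^ 2).
  { rewrite sumR_sqr_of_norm2. apply pow_incr. split; [apply sqrt_pos | exact Hsig]. }
  assert (Hterm : forall r, (r < Rk)%nat ->
            (supp_card n1 (w r) <= s1)%nat /\ sumR n1 (fun i => w r i ^ 2) = sigma r ^ 2 /\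
            sigma r ^ 2 <= Gam ^ 2 /\
            (supp_card n2 (v r) <= s2)%nat /\ sumR n2 (fun j => v r j ^ 2) = 1).
  { intros r Hr. destruct (Huv r Hr) as [Hu [Hv [Hnu Hnv]]].
    destruct (scaled_unit_vector n1 s1 (sigma r) (u r) Hu Hnu) as [Hw Hw2].
    repeat split; try assumption.
    - eapply Rle_trans; [|exact Hsig2].
      apply (sumR_le_term Rk (fun r => sigma r ^ 2)); [intros; apply pow2_ge_0 | exact Hr].
    - rewrite sumR_sqr_of_norm2, Hnv. ring. }
  destruct (fun_tuples_complete (fun _ => 0%Z, fun _ => 0%Z)
              (list_prod (lattice n1 s1) (lattice n2 s2))
              (fun r pq => (forall i, (i < n1)%nat -> fst pq i = zround K1 (w r) i) /\
                           (forall j, (j < n2)%nat -> snd pq j = zround K2 (v r) j)) Rk)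
    as [f [Hf Hfr]].
  { intros r Hr. destruct (Hterm r Hr) as [Hw [Hw2 [HwG [Hv Hv2]]]].
    apply rounded_pair_in_lattices; [assumption | rewrite Hw2; assumption | assumption | lra]. }
  eexists. split; [apply in_map, Hf|]. apply frob_le_of_sqr; [exact He|].
  set (p := fun r i => IZR (zround K1 (w r) i) / K1).
  set (q := fun r j => IZR (zround K2 (v r) j) / K2).
  rewrite (sumR_ext n1 _ (fun i => sumR n2 (fun j =>
             (sumR Rk (fun r => w r i * v r j - p r i * q r j)) ^ 2))).
  2:{ intros i Hi. apply sumR_ext. intros j Hj. unfold mat_sub.
      rewrite HZ, <- sumR_sub by assumption. f_equal. apply sumR_ext. intros r Hr.
      destruct (Hfr r Hr) as [Hp Hq]. rewrite Hp, Hq by assumption. reflexivity. }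
  eapply Rle_trans; [|apply grid_error_budget, Heps].
  apply (rank_sum_approx_error Rk n1 n2 w p v q sigma Gam
           (Gam ^ 2 / (4 * X ^ 2)) (1 ^ 2 / (4 * X ^ 2))); [| | exact Hsig2].
  - split; [apply Rdiv_ge0; nra|]. apply Rmult_le_reg_r with (4 * X ^ 2); [nra|].
    unfold Rdiv. rewrite Rmult_assoc, Rinv_l; nra.
  - intros r Hr. destruct (Hterm r Hr) as [Hw [Hw2 [HwG [Hv Hv2]]]].
    repeat split; try assumption; apply zround_sparse_error_le; assumption || lra.
Qed.

End GridCover.

Lemma ln_0 : ln 0 = 0.
Proof. unfold ln. destruct (Rlt_dec 0 0) as [H|H]; [destruct (Rlt_irrefl 0 H) | reflexivity]. Qed.

Lemma ln_le_ln x y : 0 < x -> x <= y -> ln x <= ln y.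
Proof. intros Hx [H|H]; [apply Rlt_le, ln_increasing; assumption | rewrite H; apply Rle_refl]. Qed.

Lemma ln_ge0 x : 1 <= x -> 0 <= ln x.
Proof. intros Hx. rewrite <- ln_1. apply ln_le_ln; lra. Qed.

Lemma one_le_exp_mul_div n s : (1 <= s)%nat -> (s <= n)%nat -> 1 <= exp 1 * INR n / INR s.
Proof.
  intros H1 H2. assert (1 <= INR s) by (apply (le_INR 1); auto).
  assert (INR s <= INR n) by (apply le_INR; auto).
  pose proof (exp_ineq1_le 1).
  apply Rmult_le_reg_r with (INR s); [lra|].
  unfold Rdiv. rewrite Rmult_assoc, Rinv_l; nra.
Qed.

Lemma ln_le_of_le_pow_bound N Rk s1 s2 A1 A2 G : 1 <= A1 -> 1 <= A2 -> 1 <= G ->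
  INR N <= ((A1 * G) ^ s1 * (A2 * G) ^ s2) ^ Rk ->
  ln (INR N) <= INR Rk * INR (s1 + s2 + 1) * ln G
                + INR Rk * INR s1 * ln A1 + INR Rk * INR s2 * ln A2.
Proof.
  intros HA1 HA2 HG HN.
  pose proof (ln_ge0 _ HA1). pose proof (ln_ge0 _ HA2). pose proof (ln_ge0 _ HG).
  pose proof (pos_INR Rk). pose proof (pos_INR s1). pose proof (pos_INR s2).
  assert (0 <= INR Rk * ln G) by (apply Rmult_le_pos; assumption).
  assert (Hbound : INR Rk * INR s1 * (ln A1 + ln G) + INR Rk * INR s2 * (ln A2 + ln G)
                   <= INR Rk * INR (s1 + s2 + 1) * ln G
                      + INR Rk * INR s1 * ln A1 + INR Rk * INR s2 * ln A2)
    by (rewrite !plus_INR; simpl INR; nra).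
  destruct (Nat.eq_dec N 0) as [->|HN0].
  - simpl INR. rewrite ln_0. eapply Rle_trans; [|exact Hbound].
    assert (0 <= INR Rk * INR s1 * (ln A1 + ln G)) by (repeat apply Rmult_le_pos; lra).
    assert (0 <= INR Rk * INR s2 * (ln A2 + ln G)) by (repeat apply Rmult_le_pos; lra).
    lra.
  - eapply Rle_trans; [|exact Hbound].
    assert (0 < A1 * G) by nra. assert (0 < A2 * G) by nra.
    eapply Rle_trans; [apply ln_le_ln; [apply lt_0_INR; lia | exact HN]|].
    rewrite ln_pow, ln_mult, !ln_pow, !ln_mult
      by (try apply Rmult_lt_0_compat; try apply pow_lt; lra).
    right. ring.
Qed.

Theorem mainTheorem9 (Rk : nat) (Gam : R) (n1 n2 s1 s2 : nat) (eps : R) :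
  (1 <= Rk)%nat -> 1 <= Gam ->
  (1 <= s1)%nat -> (s1 <= n1)%nat -> (1 <= s2)%nat -> (s2 <= n2)%nat ->
  0 < eps -> eps < 1 ->
  exists N : nat,
    is_covering_number n1 n2 (S_set n1 n2 s1 s2 Rk Gam) eps N /\
    ln (INR N) <=
      INR Rk * INR (s1 + s2 + 1) * ln (18 * Gam * INR Rk / eps)
      + INR Rk * INR s1 * ln (exp 1 * INR n1 / INR s1)
      + INR Rk * INR s2 * ln (exp 1 * INR n2 / INR s2).
Proof.
  intros HRk HGam Hs1 Hn1 Hs2 Hn2 He0 He1.
  assert (HRk' : 1 <= INR Rk) by (apply (le_INR 1); exact HRk).
  set (X := 2 * Gam * INR Rk / eps).
  assert (HeX : eps * X = 2 * Gam * INR Rk) by (unfold X; field; lra).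
  assert (HX : 1 <= X).
  { apply Rmult_le_reg_l with eps; [exact He0|]. rewrite HeX. nra. }
  assert (Hcover : is_cover n1 n2 (S_set n1 n2 s1 s2 Rk Gam) eps
                     (grid_centers n1 n2 s1 s2 Rk Gam X)).
  { apply grid_centers_cover; try assumption; [lra | lra |]. rewrite HeX. nra. }
  destruct (covering_number_exists _ _ _ _ _ Hcover) as [N [HN Hlen]].
  exists N. split; [exact HN|].
  replace (18 * Gam * INR Rk / eps) with (9 * X) by (unfold X; field; lra).
  apply ln_le_of_le_pow_bound; [apply one_le_exp_mul_div; assumption .. | lra |].
  eapply Rle_trans; [apply le_INR, Hlen | apply length_grid_centers_le; assumption || lra].
Qed.
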